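(* Let $d,n\ge 2$, $0\le\varepsilon\le 1/256$, and let $\mathcal U$ be a configuration of $n$ opinions in $\mathbb S^{d-1}$ that is $\varepsilon$-inactive. Then there is a unique partition of $[n]$ into clusters of $\mathcal U$. Furthermore, if $\varepsilon<\frac{1}{d(d+1)}$, then there are at most $d$ clusters.
   Context: Opinions are unit vectors in $\mathbb R^d$; a configuration is an $n$-tuple $(\vec u_1,\dots,\vec u_n)$, $A_{ij}=\langle\vec u_i,\vec u_j\rangle$. A configuration is $\varepsilon$-inactive if for all $i,j$, either $|A_{ij}|\le\varepsilon$ or $|A_{ij}|\ge 1-\varepsilon$. For an $\varepsilon$-inactive configuration, a nonempty set $C\subseteq[n]$ is a cluster if $|A_{ij}|\ge1-\varepsilon$ for all $i,j\in C$, and $|A_{ij}|\le\varepsilon$ for all $i\in C$, $j\notin C$. *)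

From mathcomp Require Import all_boot all_order all_algebra.
From mathcomp Require Import reals.
Set Implicit Arguments. Unset Strict Implicit. Unset Printing Implicit Defensive.
Import Order.TTheory GRing.Theory Num.Theory.
Local Open Scope ring_scope.

Definition inner (R : realType) (d : nat) (u v : 'rV[R]_d) : R := (u *m v^T) 0 0.

Definition on_sphere (R : realType) (d n : nat) (U : 'I_n -> 'rV[R]_d) : Prop :=
  forall i, inner (U i) (U i) = 1.

Definition Amat (R : realType) (d n : nat) (U : 'I_n -> 'rV[R]_d) (i j : 'I_n) : R :=
  inner (U i) (U j).

Definition eps_inactive (R : realType) (d n : nat) (U : 'I_n -> 'rV[R]_d) (eps : R) : Prop :=
  forall i j, `|Amat U i j| <= eps \/ 1 - eps <= `|Amat U i j|.

Definition is_cluster (R : realType) (d n : nat) (U : 'I_n -> 'rV[R]_d) (eps : R)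
  (C : {set 'I_n}) : Prop :=
  C != set0 /\
  (forall i j, i \in C -> j \in C -> 1 - eps <= `|Amat U i j|) /\
  (forall i j, i \in C -> j \notin C -> `|Amat U i j| <= eps).

Definition cluster_partition (R : realType) (d n : nat) (U : 'I_n -> 'rV[R]_d) (eps : R)
  (P : {set {set 'I_n}}) : Prop :=
  partition P [set: 'I_n] /\ (forall C, C \in P -> is_cluster U eps C).

From mathcomp Require Import all_boot all_order all_algebra.
From mathcomp Require Import reals.
From mathcomp Require Import ring lra.
Set Implicit Arguments. Unset Strict Implicit. Unset Printing Implicit Defensive.
Import Order.TTheory GRing.Theory Num.Theory.
Local Open Scope ring_scope.

(** Expanding [0 <= |u - 2s v + st w|^2] for unit vectors and well-chosen
    signs [s], [t] gives [|<u,w>| >= 2|<u,v>| + 2|<v,w>| - 3], so for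
    [eps < 1/5] "nearly (anti)parallel" is transitive on an [eps]-inactive
    configuration; the clusters are then exactly its equivalence classes,
    which yields existence and uniqueness of the partition.  Picking one
    opinion per cluster gives unit vectors whose Gram matrix is strictly
    diagonally dominant as soon as [(#clusters - 1) eps < 1]; such vectors are
    linearly independent, hence at most [d] of them. *)

Section Inner.
Variables (R : realType) (d : nat).
Implicit Types u v w : 'rV[R]_d.

Lemma innerE u v : inner u v = \sum_k u 0 k * v 0 k.
Proof. by rewrite /inner !mxE; apply: eq_bigr => k _; rewrite mxE. Qed.

Lemma inner_sym u v : inner u v = inner v u.
Proof. by rewrite !innerE; apply: eq_bigr => k _; rewrite mulrC. Qed.

Lemma inner_mulmx m (c : 'rV[R]_m) (M : 'M[R]_(m, d)) v :
  inner (c *m M) v = \sum_k c 0 k * inner (row k M) v.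
Proof.
rewrite /inner -mulmxA mxE; apply: eq_bigr => k _.
by rewrite -row_mul [in RHS]mxE.
Qed.

Lemma inner_norm_trans u v w :
  inner u u = 1 -> inner v v = 1 -> inner w w = 1 ->
  2 * `|inner u v| + 2 * `|inner v w| - 3 <= `|inner u w|.
Proof.
move=> u1 v1 w1.
set s : R := (-1) ^+ (inner u v < 0)%R; set t : R := (-1) ^+ (inner v w < 0)%R.
have s2 : s ^+ 2 = 1 by rewrite sqrr_sign.
have t2 : t ^+ 2 = 1 by rewrite sqrr_sign.
have su : s * inner u v = `|inner u v| by rewrite normrEsign.
have tv : t * inner v w = `|inner v w| by rewrite normrEsign.
have stw : s * t * inner u w <= `|inner u w|.
  by apply: le_trans (ler_norm _) _; rewrite !normrM !normr_sign !mul1r.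
have sq_ge0 : 0 <= \sum_k (u 0 k - 2 * s * v 0 k + s * t * w 0 k) ^+ 2.
  by apply: sumr_ge0 => k _; exact: sqr_ge0.
have expand k : (u 0 k - 2 * s * v 0 k + s * t * w 0 k) ^+ 2 =
    u 0 k * u 0 k + (4 * s ^+ 2) * (v 0 k * v 0 k)
    + (s ^+ 2 * t ^+ 2) * (w 0 k * w 0 k) - (4 * s) * (u 0 k * v 0 k)
    + (2 * s * t) * (u 0 k * w 0 k) - (4 * s ^+ 2 * t) * (v 0 k * w 0 k).
  by ring.
rewrite (eq_bigr _ (fun k _ => expand k)) !big_split !sumrN /= -!mulr_sumr
  -!innerE u1 v1 w1 s2 t2 in sq_ge0.
have : 4 * s * inner u v = 4 * `|inner u v| by rewrite -su mulrA.
have : 4 * t * inner v w = 4 * `|inner v w| by rewrite -tv mulrA.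
lra.
Qed.

Lemma almost_orthonormal_le_dim m (u : 'I_m -> 'rV[R]_d) (eps : R) :
  (forall k, inner (u k) (u k) = 1) ->
  (forall k l, k != l -> `|inner (u k) (u l)| <= eps) ->
  m.-1%:R * eps < 1 -> (m <= d)%N.
Proof.
move=> u1 u_orth small; pose M := \matrix_(k < m) u k.
have rowM k : row k M = u k by rewrite rowK.
suff /eqP <- : row_free M by exact: rank_leq_col.
apply: inj_row_free => c cM0.
case: m u M rowM c u1 u_orth small cM0 => [|m] u M rowM c u1 u_orth small cM0.
  by apply/rowP => -[].
have [k0 _ c_max] := @arg_maxP _ R _ ord0 xpredT (fun k => `|c 0 k|) isT.
have gram0 : \sum_k c 0 k * inner (u k) (u k0) = 0.
  transitivity (inner (c *m M) (u k0)); last by rewrite cM0 /inner mul0mx mxE.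
  by rewrite inner_mulmx; apply: eq_bigr => k _; rewrite rowM.
rewrite (bigD1 k0) //= u1 mulr1 in gram0.
have c_k0E : c 0 k0 = - \sum_(k | k != k0) c 0 k * inner (u k) (u k0).
  by apply/eqP; rewrite -addr_eq0 gram0.
have c_k0_le : `|c 0 k0| <= `|c 0 k0| * eps *+ #|predC1 k0|.
  rewrite -sumr_const {1}c_k0E normrN.
  apply: le_trans (ler_norm_sum _ _ _) _; apply: ler_sum => k k_ne.
  by rewrite normrM; apply: ler_pM => //; [exact: c_max | exact: u_orth].
rewrite cardC1 card_ord /= -mulr_natr in c_k0_le.
have c_k0_0 : `|c 0 k0| <= 0 by nra.
apply/rowP => k; apply/eqP; rewrite mxE -normr_le0.
exact: le_trans (c_max k isT) c_k0_0.
Qed.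

End Inner.

Section Clusters.
Variables (R : realType) (d n : nat) (U : 'I_n -> 'rV[R]_d) (eps : R).
Hypotheses (sphereU : on_sphere U) (eps_ge0 : 0 <= eps).

Definition aligned (i j : 'I_n) : bool := 1 - eps <= `|Amat U i j|.

Lemma Amat_sym i j : Amat U i j = Amat U j i.
Proof. exact: inner_sym. Qed.

Lemma aligned_refl : reflexive aligned.
Proof. by move=> i; rewrite /aligned /Amat sphereU normr1 lerBlDr lerDl. Qed.

Lemma aligned_sym : symmetric aligned.
Proof. by move=> i j; rewrite /aligned Amat_sym. Qed.

Lemma cluster_partition_representatives P : cluster_partition U eps P ->
  exists f : 'I_#|P| -> 'I_n,
    forall k l, k != l -> `|Amat U (f k) (f l)| <= eps.
Proof.
case=> /and3P[_ trivP _] clP.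
have /fin_all_exists[f f_in] : forall k : 'I_#|P|, exists i, i \in enum_val k.
  by move=> k; apply/set0Pn; case: (clP _ (enum_valP k)).
exists f => k l k_ne_l; have [_ [_ out_l]] := clP _ (enum_valP l).
rewrite Amat_sym; apply: out_l; first exact: f_in.
have : enum_val k != enum_val l by apply: contra k_ne_l => /eqP/enum_val_inj ->.
move=> /(trivIsetP trivP _ _ (enum_valP k) (enum_valP l)) /disjointFr disj.
by rewrite disj ?f_in.
Qed.

Lemma cluster_partition_card P : cluster_partition U eps P ->
  d%:R * eps < 1 -> (#|P| <= d)%N.
Proof.
move=> partP small; rewrite leqNgt; apply/negP => d_lt_P.
have [f f_orth] := cluster_partition_representatives partP.
suff : (d.+1 <= d)%N by rewrite ltnn.
apply: (@almost_orthonormal_le_dim R d d.+1 (fun k => U (f (widen_ord d_lt_P k))) eps)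
  => [k | k l k_ne_l | //]; first exact: sphereU.
by apply: f_orth; apply: contra k_ne_l => /eqP/(congr1 val) kl; apply/eqP/val_inj.
Qed.

Section Inactive.
Hypotheses (inactiveU : eps_inactive U eps) (eps_small : 5 * eps < 1).

Lemma aligned_trans : transitive aligned.
Proof.
(* [lra] does not use section hypotheses, hence the local copies of [eps_small]. *)
move=> j i k ij jk; have small := eps_small.
have tri := inner_norm_trans (sphereU i) (sphereU j) (sphereU k).
by rewrite /aligned /Amat in ij jk *; case: (inactiveU i k) => ik; lra.
Qed.

Lemma aligned_equiv : {in [set: 'I_n] & &, equivalence_rel aligned}.
Proof.
move=> i j k _ _ _; split; first exact: aligned_refl.
move=> ij; apply/idP/idP; last exact: aligned_trans.
by apply: aligned_trans; rewrite aligned_sym.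
Qed.

Lemma cluster_eq_class C i : is_cluster U eps C -> i \in C ->
  C = [set j in [set: 'I_n] | aligned i j].
Proof.
case=> _ [inC outC] iC; apply/setP => j; rewrite !inE /=.
have [jC | jC] := boolP (j \in C); first by rewrite /aligned inC.
have small := eps_small; have ij := outC i j iC jC.
by apply/esym/negbTE; rewrite /aligned -ltNge; lra.
Qed.

Lemma class_is_cluster i : is_cluster U eps [set j in [set: 'I_n] | aligned i j].
Proof.
split; first by apply/set0Pn; exists i; rewrite !inE aligned_refl.
split=> j k; rewrite !inE /= => ij.
  by apply: aligned_trans; rewrite aligned_sym.
move=> ik; case: (inactiveU j k) => // jk.
by case/negP: ik; apply: aligned_trans ij jk.
Qed.

Lemma classes_cluster_partition :
  cluster_partition U eps (equivalence_partition aligned [set: 'I_n]).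
Proof.
split; first exact: equivalence_partitionP aligned_equiv.
by move=> C /imsetP[i _ ->]; exact: class_is_cluster.
Qed.

Lemma cluster_partition_eq P : cluster_partition U eps P ->
  P = equivalence_partition aligned [set: 'I_n].
Proof.
case=> partP clP; apply/setP => C; apply/idP/imsetP => [CP | [i _ ->]].
  have [i iC] : exists i, i \in C by apply/set0Pn; case: (clP C CP).
  by exists i => //; apply: cluster_eq_class (clP C CP) iC.
have : i \in cover P by rewrite (cover_partition partP) inE.
by case/bigcupP => D DP iD; rewrite -(cluster_eq_class (clP D DP) iD).
Qed.

End Inactive.
End Clusters.

Theorem mainTheorem10 (R : realType) (d n : nat) (U : 'I_n -> 'rV[R]_d) (eps : R) :
  (2 <= d)%N -> (2 <= n)%N ->
  0 <= eps -> eps <= 1 / 256%:R ->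
  on_sphere U -> eps_inactive U eps ->
  (exists P : {set {set 'I_n}},
      cluster_partition U eps P /\
      forall P' : {set {set 'I_n}}, cluster_partition U eps P' -> P' = P) /\
  (eps < 1 / (d * (d + 1))%:R ->
     forall P : {set {set 'I_n}}, cluster_partition U eps P -> (#|P| <= d)%N).
Proof.
move=> d_ge2 _ eps_ge0 eps_le sphereU inactiveU; split.
  have eps_small : 5 * eps < 1 by lra.
  exists (equivalence_partition (aligned U eps) [set: 'I_n]); split.
    exact: classes_cluster_partition.
  by move=> P; apply: cluster_partition_eq.
move=> eps_lt P partP; apply: (cluster_partition_card sphereU partP).
have d_gt0 : (0 : R) < (d * (d + 1))%:R.
  by rewrite ltr0n muln_gt0 addn1 andbT (leq_trans _ d_ge2).
rewrite ltr_pdivlMr // natrM natrD in eps_lt.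
have d_ge0 : (0 : R) <= d%:R by [].
nra.
Qed.
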